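(* Let $n\ge1$, $m\ge1$ and $0\le j\le n$. For every integer $k\ge0$, the weight numbers of $\Delta^j_{n,m}=\Delta(G^j_{n,m})$ satisfy $$W_{\Delta^j_{n,m}}(k)=\sum_{i=0}^j2^{j-i}(-1)^i\binom ji W_{\Delta^0_{n-i,m}}(k),$$ where $W_{\Delta^0_{0,m}}(k)=1$ if $k=0$ and $0$ otherwise.
   Context: $G^j_{n,m}=x_1^m+\dots+x_n^m+x_1^{-m}+\dots+x_j^{-m}$; its Newton polytope $\Delta^j_{n,m}$ is the convex hull of $\vec0$, $me_1,\dots,me_n$ and $-me_1,\dots,-me_j$, and $\Delta^0_{n',m}$ denotes the simplex with vertices $\vec 0,me_1,\dots,me_{n'}$ in $\mathbb{R}^{n'}$. For a polytope $\Delta\ni\vec0$ the weight $w(u)$ of $u\in\mathbb Q^n$ is the least $c\in\mathbb Q_{\ge0}$ with $u\in c\Delta$. All these polytopes have denominator $m$, and $W_\Delta(k)=\#\{u\in\mathbb{Z}^n:w(u)=k/m\}$. *)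

From HB Require Import structures.
From mathcomp Require Import all_boot all_order all_algebra.
From Stdlib Require Import ClassicalEpsilon.
Set Implicit Arguments. Unset Strict Implicit. Unset Printing Implicit Defensive.
Import Order.TTheory GRing.Theory Num.Theory.
Local Open Scope ring_scope.

Definition pt (n : nat) := 'I_n -> rat.

Definition pb (P : Prop) : bool :=
  if excluded_middle_informative P then true else false.

Definition in_hull (n : nat) (V : seq (pt n)) (x : pt n) : Prop :=
  exists lam : nat -> rat,
    (forall i, 0 <= lam i) /\
    \sum_(i < size V) lam i = 1 /\
    forall t : 'I_n, x t = \sum_(i < size V) lam i * (nth (fun _ => 0) V i) t.

Definition in_dilate (n : nat) (V : seq (pt n)) (c : rat) (x : pt n) : Prop :=
  exists y, in_hull V y /\ forall t, x t = c * y t.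

Definition is_weight (n : nat) (V : seq (pt n)) (x : pt n) (c : rat) : Prop :=
  0 <= c /\ in_dilate V c x /\
  forall c', 0 <= c' -> in_dilate V c' x -> c <= c'.

Definition sbv (n : nat) (a : rat) (i : 'I_n) : pt n :=
  fun t => if t == i then a else 0.

Definition Delta (n m j : nat) : seq (pt n) :=
  (fun _ => 0) :: [seq sbv m%:R i | i <- enum 'I_n]
               ++ [seq sbv (- m%:R) i | i : 'I_n <- enum 'I_n & (nat_of_ord i < j)%N].

Definition Delta0 (n' m : nat) : seq (pt n') := Delta n' m 0.

Definition decode (n k : nat) (f : {ffun 'I_n -> 'I_(k.*2.+1)}) : pt n :=
  fun t => (nat_of_ord (f t))%:R - k%:R.

(* W_Delta(k) = #{u in Z^n : w(u) = k/m}.  Every such u lies in the box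
   [-k,k]^n since the polytopes used here lie in [-m,m]^n, so we count over
   that box. *)
Definition W (n : nat) (V : seq (pt n)) (m k : nat) : nat :=
  #|[pred f : {ffun 'I_n -> 'I_(k.*2.+1)} |
      pb (is_weight V (decode f) (k%:R / m%:R))]|.

From HB Require Import structures.
From mathcomp Require Import all_boot all_order all_algebra zify ring lra.
From Stdlib Require Import ClassicalEpsilon.
Import Order.TTheory GRing.Theory Num.Theory.
Set Implicit Arguments. Unset Strict Implicit. Unset Printing Implicit Defensive.
Local Open Scope ring_scope.

(* For m > 0 the weight of x with respect to Delta^j_{n,m} is |x|_1 / m when the
   coordinates x_t with t >= j are nonnegative (and x has no weight otherwise):
   that region of Q^n is exactly the set of x with |x|_1 <= m and this sign pattern,
   written as explicit convex combinations of the vertices.  Hence the integer points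
   of weight k/m are counted by the coefficient of X^k in Q^j P^(n-j), where
   P = 1 + X + ... + X^k is the generating polynomial of a nonnegative coordinate and
   Q = 2P - 1 that of a free one.  Expanding (2P - 1)^j binomially gives the formula,
   P^(n-i) being the generating polynomial of the simplex Delta^0_{n-i,m}. *)

Lemma prodr_ifXn (R : comNzRingType) (I : finType) (b : I -> bool) (e : I -> nat) :
  \prod_(t : I) (if b t then 'X^(e t) else 0 : {poly R}) =
  if [forall t, b t] then 'X^(\sum_t e t) else 0.
Proof.
case: (boolP [forall t, b t]) => [/forallP bT | /forallPn [t bNt]].
  by rewrite -prodrXr; apply: eq_bigr => t _; rewrite bT.
by rewrite (bigD1 t) //= (negbTE bNt) mul0r.
Qed.

Lemma card_ffun_weight (I J : finType) (A : I -> J -> bool) (e : J -> nat) (d : nat) :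
  (#|[pred f : {ffun I -> J} | [forall t, A t (f t)] && (\sum_t e (f t) == d)]|)%:Z
  = (\prod_t \sum_(a | A t a) 'X^(e a) : {poly int})`_d.
Proof.
under eq_bigr do rewrite big_mkcond /=.
rewrite bigA_distr_bigA /= coef_sum -sum1_card -natz natr_sum big_mkcond /=.
apply: eq_bigr => f _; rewrite prodr_ifXn inE.
case: [forall _, _]; last by rewrite coef0.
by rewrite coefXn eq_sym; case: (_ == _).
Qed.

Lemma prodr_ord_ltn_if (R : pzSemiRingType) n j (a b : R) : (j <= n)%N ->
  \prod_(t < n) (if (t < j)%N then a else b) = a ^+ j * b ^+ (n - j).
Proof.
move=> le_jn; rewrite -(big_mkord xpredT (fun t => if (t < j)%N then a else b)).
rewrite (big_cat_nat (leq0n j) le_jn) /=.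
congr (_ * _).
  rewrite -[in RHS](subn0 j) -prodr_const_nat; apply: eq_big_nat => t.
  by case/andP=> _ ->.
rewrite -prodr_const_nat; apply: eq_big_nat => t.
by case/andP=> le_jt _; rewrite ltnNge le_jt.
Qed.

Definition box_poly (k : nat) : {poly int} :=
  \sum_(a : 'I_(k.*2.+1)) 'X^`|a - k|.

Definition pos_box_poly (k : nat) : {poly int} :=
  \sum_(a : 'I_(k.*2.+1) | (k <= a)%N) 'X^`|a - k|.

(* The reflection a |-> 2k - a of the box [0, 2k] preserves |a - k| and fixes only k. *)
Lemma box_polyE k : box_poly k = pos_box_poly k *+ 2 - 1.
Proof.
have lt_k_2k1 : (k < k.*2.+1)%N by lia.
pose c : 'I_(k.*2.+1) := Ordinal lt_k_2k1.
have le_k_pos : \sum_(a : 'I_(k.*2.+1) | (a <= k)%N) 'X^`|a - k| = pos_box_poly k.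
  rewrite /pos_box_poly (reindex_inj rev_ord_inj) /=.
  apply: eq_big => a; have := ltn_ord a; rewrite /= => lt_a.
    by apply/idP/idP; lia.
  by move=> _; congr ('X^_); lia.
rewrite /box_poly (bigID (fun a : 'I_(k.*2.+1) => (k <= a)%N)) /= -/(pos_box_poly k).
rewrite -le_k_pos [X in _ = _ + X - _](bigD1 c) //= subrr expr0.
rewrite -addrA (addrC 1) addrK; congr (_ + _); apply: eq_bigl => a.
by rewrite -(inj_eq val_inj) /=; apply/idP/idP; lia.
Qed.

Lemma binomial_twice_sub1 (R : comNzRingType) (p : {poly R}) n j : (j <= n)%N ->
  (p *+ 2 - 1) ^+ j * p ^+ (n - j) =
  \sum_(i < j.+1) ((2 ^ (j - i) * 'C(j, i))%:R * (-1) ^+ i) *: p ^+ (n - i).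
Proof.
move=> le_jn; rewrite exprDn mulr_suml; apply: eq_bigr => -[i /= le_ij] _.
have -> : (n - i = (j - i) + (n - j))%N by lia.
rewrite exprD exprMn_n natrM -!scaler_nat -!mul_polyC !rmorphM !rmorphXn /= rmorphN rmorph1.
by rewrite !polyC_natr; ring.
Qed.

Definition norm1 n (x : pt n) : rat := \sum_t `|x t|.

Definition nonneg_from n j (x : pt n) : Prop :=
  forall t : 'I_n, (j <= t)%N -> 0 <= x t.

Lemma norm1_ge0 n (x : pt n) : 0 <= norm1 x.
Proof. by apply: sumr_ge0 => t _. Qed.

Lemma norm1_sbv n a (s : 'I_n) : norm1 (sbv a s) = `|a|.
Proof.
rewrite /norm1 (bigD1 s) //= /sbv eqxx big1 ?addr0 // => t /negbTE ->.
by rewrite normr0.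
Qed.

Lemma norm1_scale n (c : rat) (x : pt n) : norm1 (fun t => c * x t) = `|c| * norm1 x.
Proof. by rewrite /norm1 mulr_sumr; apply: eq_bigr => t _; rewrite normrM. Qed.

Lemma norm1_le0 n (x : pt n) t : norm1 x <= 0 -> x t = 0.
Proof.
move=> x_le0; apply/eqP; rewrite -normr_le0; apply: le_trans x_le0.
by rewrite /norm1 (bigD1 t) //= lerDl sumr_ge0.
Qed.

Section Hull.
Variables (n : nat) (V : seq (pt n)) (y : pt n).
Hypothesis hull_y : in_hull V y.

Lemma in_hull_ge0 t :
  (forall i, 0 <= nth (fun _ => 0) V i t) -> 0 <= y t.
Proof.
case: hull_y => lam [lam_ge0 [_ ->]] V_ge0.
by apply: sumr_ge0 => i _; apply: mulr_ge0.
Qed.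

Lemma in_hull_norm1_le r :
  (forall i, norm1 (nth (fun _ => 0) V i) <= r) -> norm1 y <= r.
Proof.
case: hull_y => lam [lam_ge0 [lam_sum1 y_def]] V_le.
pose v i := nth (fun _ => 0) V i.
apply: (@le_trans _ _ (\sum_t \sum_(i < size V) lam i * `|v i t|)).
  apply: ler_sum => t _; rewrite y_def; apply: (le_trans (ler_norm_sum _ _ _)).
  by apply: ler_sum => i _; rewrite normrM (ger0_norm (lam_ge0 i)).
rewrite exchange_big /= -[r]mul1r -lam_sum1 mulr_suml.
by apply: ler_sum => i _; rewrite -mulr_sumr; apply: ler_wpM2l => //; apply: V_le.
Qed.

End Hull.

Definition pos_part (a : rat) := if 0 <= a then a else 0.
Definition neg_part (a : rat) := if 0 <= a then 0 else - a.

Lemma pos_partB_neg_part a : pos_part a - neg_part a = a.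
Proof. by rewrite /pos_part /neg_part; case: ifP => _; rewrite ?subr0 ?sub0r ?opprK. Qed.

Lemma pos_partD_neg_part a : pos_part a + neg_part a = `|a|.
Proof.
rewrite /pos_part /neg_part; case: (lerP 0 a) => a0.
  by rewrite addr0 ger0_norm.
by rewrite add0r ltr0_norm.
Qed.

Lemma pos_part_ge0 a : 0 <= pos_part a.
Proof. by rewrite /pos_part; case: ifP. Qed.

Lemma neg_part_ge0 a : 0 <= neg_part a.
Proof. by rewrite /neg_part; case: (lerP 0 a) => // a0; rewrite oppr_ge0 ltW. Qed.

Lemma neg_part_eq0 a : 0 <= a -> neg_part a = 0.
Proof. by rewrite /neg_part => ->. Qed.

Section Delta.
Variables n m j : nat.
Hypothesis m_gt0 : (0 < m)%N.

Let vertex i := nth (fun _ => 0) (Delta n m j) i.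
Let m_gt0' : (0 : rat) < m%:R. Proof. by rewrite ltr0n. Qed.
Let m_neq0 : (m%:R : rat) != 0. Proof. by rewrite gt_eqF. Qed.

Lemma big_Delta (G : pt n -> rat) :
  \sum_(i < size (Delta n m j)) G (vertex i) =
  G (fun _ => 0) + \sum_s G (sbv m%:R s) + \sum_(s : 'I_n | (s < j)%N) G (sbv (- m%:R) s).
Proof.
rewrite -(big_mkord xpredT (G \o vertex)) -(big_nth (fun _ => 0) xpredT G).
by rewrite /Delta big_cons big_cat !big_map big_filter addrA big_enum_cond.
Qed.

Lemma all_Delta_nth (p : pred (pt n)) :
  p (fun _ => 0) -> (forall s, p (sbv m%:R s)) ->
  (forall s : 'I_n, (s < j)%N -> p (sbv (- m%:R) s)) ->
  forall i, p (vertex i).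
Proof.
move=> p0 p_pos p_neg i; case: (ltnP i (size (Delta n m j))) => lt_i; last first.
  by rewrite /vertex nth_default.
move: i lt_i; apply/all_nthP; rewrite /= p0 all_cat !all_map /=.
apply/andP; split; apply/allP => s //=.
by rewrite mem_filter => /andP [? _]; apply: p_neg.
Qed.

Lemma Delta_vertex_nonneg i : nonneg_from j (vertex i).
Proof.
move=> t le_jt; move: i.
apply: (@all_Delta_nth (fun v => 0 <= v t)) => // s; rewrite /sbv.
  by case: (_ == _).
by case: eqP => [<- lt_tj|//]; move: le_jt lt_tj; lia.
Qed.

Lemma Delta_vertex_norm1 i : norm1 (vertex i) <= m%:R.
Proof.
apply: (@all_Delta_nth (fun v => norm1 v <= m%:R)) => [|s|s _].
- by rewrite /norm1 big1 // => t _; rewrite normr0.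
- by rewrite norm1_sbv ger0_norm.
- by rewrite norm1_sbv normrN ger0_norm.
Qed.

Section HullDelta.
Variable y : pt n.
Hypotheses (y_nonneg : nonneg_from j y) (y_norm1 : norm1 y <= m%:R).

(* The convex weights exhibiting [y]: [y_t^+ / m] on [m e_t], [y_t^- / m] on [-m e_t]
   and the remaining mass on the origin. *)
Let weight (v : pt n) : rat :=
  (if [forall t, v t == 0] then 1 - norm1 y / m%:R else 0) +
  \sum_t (pos_part (y t) * (v t == m%:R)%:R + neg_part (y t) * (v t == - m%:R)%:R) / m%:R.

Let weight_origin : weight (fun _ => 0) = 1 - norm1 y / m%:R.
Proof.
rewrite /weight; have -> : [forall t : 'I_n, (0 : rat) == 0] by apply/forallP.
rewrite big1 ?addr0 // => t _.
by rewrite ![0 == _]eq_sym oppr_eq0 (negbTE m_neq0) !mulr0 addr0 mul0r.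
Qed.

Let weight_sbv a s : a != 0 -> weight (sbv a s) =
  (pos_part (y s) * (a == m%:R)%:R + neg_part (y s) * (a == - m%:R)%:R) / m%:R.
Proof.
move=> a_neq0; rewrite /weight; have -> : [forall t, sbv a s t == 0] = false.
  by apply/negbTE/forallPn; exists s; rewrite /sbv eqxx.
rewrite add0r (bigD1 s) //= big1 ?addr0 /sbv ?eqxx // => t /negbTE ->.
by rewrite ![0 == _]eq_sym oppr_eq0 (negbTE m_neq0) !mulr0 addr0 mul0r.
Qed.

Let weight_pos s : weight (sbv m%:R s) = pos_part (y s) / m%:R.
Proof.
have m_neq_oppm : (m%:R == - m%:R :> rat) = false by apply/eqP; move: m_gt0'; lra.
by rewrite weight_sbv // eqxx m_neq_oppm mulr0 addr0 mulr1.
Qed.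

Let weight_neg s : weight (sbv (- m%:R) s) = neg_part (y s) / m%:R.
Proof.
have oppm_neq_m : (- m%:R == m%:R :> rat) = false by apply/eqP; move: m_gt0'; lra.
by rewrite weight_sbv ?oppr_eq0 // eqxx oppm_neq_m mulr0 add0r mulr1.
Qed.

Let weight_ge0 v : 0 <= weight v.
Proof.
apply: addr_ge0.
  by case: ifP => // _; rewrite subr_ge0 ler_pdivrMr // mul1r.
apply: sumr_ge0 => t _; apply: divr_ge0; last exact: ltW.
by apply: addr_ge0; apply: mulr_ge0; rewrite ?pos_part_ge0 ?neg_part_ge0 ?ler0n.
Qed.

Let sum_neg_part_ltn (F : 'I_n -> rat) :
  \sum_(s : 'I_n | (s < j)%N) neg_part (y s) * F s = \sum_s neg_part (y s) * F s.
Proof.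
rewrite [RHS](bigID (fun s : 'I_n => (s < j)%N)) /= [X in _ = _ + X]big1 ?addr0 // => s.
by rewrite -leqNgt => le_js; rewrite neg_part_eq0 ?mul0r // y_nonneg.
Qed.

Lemma in_hull_Delta : in_hull (Delta n m j) y.
Proof.
exists (fun i => weight (nth (fun _ => 0) (Delta n m j) i)); split => //; split.
  rewrite (big_Delta weight) weight_origin.
  under eq_bigr do rewrite weight_pos.
  under [in X in _ + X]eq_bigr do rewrite weight_neg.
  rewrite sum_neg_part_ltn -!mulr_suml -addrA -mulrDl -big_split /=.
  by under eq_bigr do rewrite pos_partD_neg_part; rewrite subrK.
move=> t; rewrite (big_Delta (fun v => weight v * v t)) weight_origin mulr0 add0r.
under eq_bigr do rewrite weight_pos -mulrA.
under [in X in _ + X]eq_bigr do rewrite weight_neg -mulrA.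
rewrite sum_neg_part_ltn -big_split (bigD1 t) //= big1 ?addr0 => [|s].
  by rewrite /sbv eqxx mulrN mulVf // mulr1 mulrN1 pos_partB_neg_part.
by rewrite /sbv eq_sym => /negbTE ->; rewrite !mulr0 addr0.
Qed.

End HullDelta.

Lemma in_dilate_DeltaP c (x : pt n) : 0 <= c ->
  in_dilate (Delta n m j) c x <-> nonneg_from j x /\ norm1 x <= c * m%:R.
Proof.
move=> c_ge0; split.
  move=> [y [hull_y x_def]].
  have -> : norm1 x = c * norm1 y.
    by rewrite -(ger0_norm c_ge0) -norm1_scale; apply: eq_bigr => t _; rewrite x_def.
  split.
    move=> t le_jt; rewrite x_def mulr_ge0 // (in_hull_ge0 hull_y) // => i.
    exact: Delta_vertex_nonneg.
  by rewrite ler_wpM2l // (in_hull_norm1_le hull_y) // => i; apply: Delta_vertex_norm1.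
move=> [x_nonneg x_norm1]; exists (fun t => x t / c); split.
  apply: in_hull_Delta => [t le_jt|]; first by rewrite divr_ge0 ?x_nonneg.
  have -> : norm1 (fun t => x t / c) = c^-1 * norm1 x.
    have cV_ge0 : 0 <= c^-1 by rewrite invr_ge0.
    rewrite -[in RHS](ger0_norm cV_ge0) -norm1_scale /norm1.
    by apply: eq_bigr => t _; rewrite mulrC.
  case: (eqVneq c 0) => [->|c_neq0]; first by rewrite invr0 mul0r.
  by rewrite mulrC ler_pdivrMr ?lt_def ?c_neq0 // mulrC.
move=> t; case: (eqVneq c 0) => [c0|c_neq0]; last by rewrite mulrC divfK.
by rewrite c0 mul0r norm1_le0 // -(mul0r m%:R) -c0.
Qed.

Lemma is_weight_DeltaP (x : pt n) c :
  is_weight (Delta n m j) x c <-> nonneg_from j x /\ c = norm1 x / m%:R.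
Proof.
have w_ge0 : 0 <= norm1 x / m%:R by rewrite divr_ge0 ?norm1_ge0 ?ltW.
have w_dilate : nonneg_from j x -> in_dilate (Delta n m j) (norm1 x / m%:R) x.
  by move=> x_nonneg; apply/in_dilate_DeltaP => //; rewrite divfK ?gt_eqF.
split.
  move=> [c_ge0 [/(in_dilate_DeltaP _ c_ge0) [x_nonneg x_norm1] c_min]].
  split=> //; apply/le_anti/andP; split; first exact: c_min (w_dilate x_nonneg).
  by rewrite ler_pdivrMr.
move=> [x_nonneg ->]; split=> //; split; first exact: w_dilate.
by move=> c' c'_ge0 /(in_dilate_DeltaP _ c'_ge0) [_]; rewrite ler_pdivrMr.
Qed.

End Delta.

Lemma pbE (P : Prop) (b : bool) : (P <-> b) -> pb P = b.
Proof.
move=> P_b; rewrite /pb; case: excluded_middle_informative => [/P_b -> //|NP].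
by apply/esym/negbTE/negP => /P_b.
Qed.

Lemma norm1_decode n k (f : {ffun 'I_n -> 'I_(k.*2.+1)}) :
  norm1 (decode f) = (\sum_t `|f t - k|%N)%:R.
Proof.
rewrite /norm1 natr_sum; apply: eq_bigr => t _.
by rewrite /decode natr_absz intr_norm intrB.
Qed.

Lemma W_Delta_coef n m j k : (0 < m)%N -> (j <= n)%N ->
  (W (Delta n m j) m k)%:Z = (box_poly k ^+ j * pos_box_poly k ^+ (n - j))`_k.
Proof.
move=> m_gt0 le_jn; have m_neq0 : (m%:R : rat) != 0 by rewrite pnatr_eq0 -lt0n.
rewrite -prodr_ord_ltn_if //.
have -> : \prod_(t < n) (if (t < j)%N then box_poly k else pos_box_poly k) =
          \prod_(t < n) \sum_(a : 'I_(k.*2.+1) | (j <= t)%N ==> (k <= a)%N) 'X^`|a - k|.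
  by apply: eq_bigr => t _; case: ltnP => _; apply: eq_bigl.
rewrite -card_ffun_weight /W; congr (_%:Z); apply: eq_card => f; rewrite !inE.
apply: pbE; rewrite is_weight_DeltaP // norm1_decode; split.
  move=> [f_nonneg /(congr1 (fun w => w * m%:R))]; rewrite !divfK // => /eqP.
  rewrite eqr_nat eq_sym => ->; rewrite andbT; apply/forallP => t; apply/implyP.
  by move=> /f_nonneg; rewrite /decode subr_ge0 ler_nat.
move=> /andP [/forallP f_nonneg /eqP ->]; split=> // t le_jt.
by have := f_nonneg t; rewrite le_jt /decode subr_ge0 ler_nat.
Qed.

Theorem proposition4p3 (n m j k : nat) :
  (1 <= n)%N -> (1 <= m)%N -> (j <= n)%N ->
  ((W (Delta n m j) m k)%:Z : int) =
  \sum_(i < j.+1)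
     ((2 ^ (j - i) * 'C(j, i) * W (Delta0 (n - i) m) m k)%N%:Z * (-1) ^+ i).
Proof.
move=> _ m_gt0 le_jn.
rewrite W_Delta_coef // box_polyE binomial_twice_sub1 // coef_sum.
apply: eq_bigr => i _.
by rewrite /Delta0 PoszM W_Delta_coef // expr0 mul1r subn0 coefZ natz mulrAC.
Qed.
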